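(* Let $T=ABCD$ be a nondegenerate tetrahedron in $\mathbb{R}^3$ (vertices not coplanar) and let $AB$ be one of its edges. If $\mathbf{v}_{AB}(T)=\mathbf{0}$, then $T$ is achiral.
   Context: A tetrahedron (an ordered or unordered set of four points) in $\mathbb{R}^3$ is achiral if it can be mapped onto its mirror image by an orientation-preserving isometry of $\mathbb{R}^3$ (equivalently, it is congruent to its mirror image via a proper rigid motion); otherwise it is chiral. Edge vector $\mathbf{v}_{AB}$: Given the edge $AB$ of $T=ABCD$, label the four vertices as $L,R,K,F$ with $\{L,R\}=\{A,B\}$ and $\{K,F\}=\{C,D\}$ such that $(\vec{LK}\times\vec{LF})\cdot\vec{LR}\ge 0$ (there are two such labellings, obtained from each other by swapping $L\leftrightarrow R$ together with $K\leftrightarrow F$; both give the same $\mathbf{v}_{AB}$ below). Rotate the faces $LRK$ and $LRF$ about the line $LR$ into a common plane with $K$ and $F$ on the same side of $LR$. In this plane use the Cartesian coordinates whose $x$-axis is the line $LR$ directed from $L$ to $R$ and whose $y$-axis is the perpendicular bisector $m$ of segment $LR$, with $y\ge 0$ on the side containing $K,F$. Thus $x_K$ is the signed distance from $K$ to $m$ (negative if $K$ is closer to $L$ than to $R$), i.e. $x_K=\frac{\vec{LK}\cdot\vec{LR}}{|LR|}-\frac{|LR|}{2}$, and $y_K=\frac{|\vec{LK}\times\vec{LR}|}{|LR|}\ge 0$ is the distance from $K$ to the line $LR$; similarly for $(x_F,y_F)$. Let $\alpha\in[0,\pi]$ be the dihedral angle between the planes $ABC$ and $ABD$ of $T$. Define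 $$\mathbf{v}_{AB}\coloneqq \sin(\alpha)\,\big(x_F-x_K,\ (y_F-y_K)(x_F+x_K)\big)\in\mathbb{R}^2.$$ *)

From HB Require Import structures.
From mathcomp Require Import all_boot all_order all_algebra.
From mathcomp Require Import all_classical all_reals all_analysis.
Set Implicit Arguments. Unset Strict Implicit. Unset Printing Implicit Defensive.
Import Order.TTheory GRing.Theory Num.Theory.
Local Open Scope ring_scope.

Section Tetra.
Variable R : realType.
Notation pt := 'rV[R]_3.

Definition c0 : 'I_3 := @Ordinal 3 0 isT.
Definition c1 : 'I_3 := @Ordinal 3 1 isT.
Definition c2 : 'I_3 := @Ordinal 3 2 isT.

Definition dot (u v : pt) : R := \sum_(i < 3) u 0 i * v 0 i.
Definition vnorm (u : pt) : R := Num.sqrt (dot u u).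
Definition cross (u v : pt) : pt :=
  \row_(i < 3)
    (if i == c0 then u 0 c1 * v 0 c2 - u 0 c2 * v 0 c1
     else if i == c1 then u 0 c2 * v 0 c0 - u 0 c0 * v 0 c2
     else u 0 c0 * v 0 c1 - u 0 c1 * v 0 c0).

Definition vec (O P : pt) : pt := P - O.

Definition tetra_nondeg (A B C D : pt) : Prop :=
  dot (cross (vec A C) (vec A D)) (vec A B) != 0.

(* interior dihedral angle at edge AB between faces ABC and ABD, in [0, pi]:
   angle between the components of AC and AD orthogonal to AB *)
Definition perp_comp (A B P : pt) : pt :=
  vec A P - (dot (vec A P) (vec A B) / dot (vec A B) (vec A B)) *: vec A B.
Definition dihedral (A B C D : pt) : R :=
  let u := perp_comp A B C in let w := perp_comp A B D in
  acos (dot u w / (vnorm u * vnorm w)).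

(* planar coordinates of K w.r.t. the directed segment L -> R' *)
Definition xcoord (L R' K : pt) : R :=
  dot (vec L K) (vec L R') / vnorm (vec L R') - vnorm (vec L R') / 2.
Definition ycoord (L R' K : pt) : R :=
  vnorm (cross (vec L K) (vec L R')) / vnorm (vec L R').

Definition v_lab (alpha : R) (L R' K F : pt) : R * R :=
  (sin alpha * (xcoord L R' F - xcoord L R' K),
   sin alpha * ((ycoord L R' F - ycoord L R' K) * (xcoord L R' F + xcoord L R' K))).

(* v_AB(T) for T = ABCD: choose the labelling L = A, R' = B and
   (K, F) = (C, D) or (D, C) so that ((K-L) x (F-L)) . (R'-L) >= 0. *)
Definition v_edge (A B C D : pt) : R * R :=
  let alpha := dihedral A B C D in
  if 0 <= dot (cross (vec A C) (vec A D)) (vec A B)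
  then v_lab alpha A B C D
  else v_lab alpha A B D C.

Definition mirror (P : pt) : pt :=
  \row_(i < 3) (if i == c0 then - P 0 i else P 0 i).

(* orientation-preserving isometry x |-> x Q + t, Q orthogonal with det 1 *)
Definition rotation (Q : 'M[R]_3) : Prop := Q *m Q^T = 1%:M /\ \det Q = 1.

Definition achiral (A B C D : pt) : Prop :=
  exists (Q : 'M[R]_3) (t : pt), rotation Q /\
    let S := [:: A; B; C; D] in
    let M := [seq mirror P | P <- S] in
    (forall P, P \in S -> P *m Q + t \in M) /\
    (forall P', P' \in M -> exists2 P, P \in S & P *m Q + t = P').

End Tetra.

From mathcomp Require Import all_boot all_order all_algebra.
From mathcomp Require Import all_classical all_reals all_analysis.
From mathcomp Require Import ring lra.
Import Order.TTheory GRing.Theory Num.Theory.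
Set Implicit Arguments. Unset Strict Implicit. Unset Printing Implicit Defensive.
Local Open Scope ring_scope.

(* If v_AB(T) = 0 then, since sin(alpha) > 0 for a nondegenerate
   tetrahedron, x_F = x_K and either y_F = y_K or x_F + x_K = 0.  The planar
   coordinates are governed by squared distances:
     x_K = (|AK|^2 - |BK|^2) / (2|AB|),   y_K^2 = |AK|^2 - (AK.AB)^2 / |AB|^2.
   - If x_C = x_D and y_C = y_D, then |AC| = |AD| and |BC| = |BD|: the
     reflection in the perpendicular bisector plane of CD swaps C and D and
     fixes A and B.
   - If x_C = x_D = 0, then |AC| = |BC| and |AD| = |BD|: the reflection in the
     perpendicular bisector plane of AB swaps A and B and fixes C and D.
   In both cases a plane reflection permutes the vertices; composing it with
   the mirror x |-> (-x1, x2, x3) yields a proper rigid motion mapping the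
   tetrahedron onto its mirror image, i.e. T is achiral. *)

Section Tetrahedron.
Variable R : realType.
Implicit Types (u w n A B C D K L M P X Y : 'rV[R]_3).

Definition dist2 P Q : R := dot (vec P Q) (vec P Q).

Lemma ord3P (j : 'I_3) : j = c0 \/ j = c1 \/ j = c2.
Proof.
case: j => [[|[|[|k]]] Hk]; last by [].
- by left; apply/val_inj.
- by right; left; apply/val_inj.
- by right; right; apply/val_inj.
Qed.

Lemma sum3 (F : 'I_3 -> R) : \sum_(i < 3) F i = F c0 + F c1 + F c2.
Proof.
rewrite !big_ord_recl big_ord0 addr0 addrA.
by congr (F _ + F _ + F _); apply/val_inj.
Qed.

Lemma det3 (Q : 'M[R]_3) : \det Q =
  Q c0 c0 * (Q c1 c1 * Q c2 c2 - Q c1 c2 * Q c2 c1)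
  - Q c0 c1 * (Q c1 c0 * Q c2 c2 - Q c1 c2 * Q c2 c0)
  + Q c0 c2 * (Q c1 c0 * Q c2 c1 - Q c1 c1 * Q c2 c0).
Proof.
rewrite (expand_det_row _ ord0) sum3 /cofactor.
rewrite !(expand_det_row _ ord0) /cofactor !big_ord_recl !big_ord0 !det_mx11 !mxE /=.
pose g (a b : nat) := Q (inord a) (inord b).
have Qg i j : Q i j = g i j by rewrite /g !inord_val.
rewrite !Qg /= /bump /= !expr0 !expr1; ring.
Qed.

Lemma dotE u w : dot u w = u 0 c0 * w 0 c0 + u 0 c1 * w 0 c1 + u 0 c2 * w 0 c2.
Proof. by rewrite /dot sum3. Qed.

Lemma dot_ge0 u : 0 <= dot u u.
Proof. rewrite dotE; nra. Qed.

Lemma dot_eq0 u : (dot u u == 0) = (u == 0).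
Proof.
apply/eqP/eqP => [|->]; last by rewrite /dot big1 // => i _; rewrite mxE mul0r.
rewrite dotE => u0; apply/rowP => j; rewrite mxE.
have sq0 (a b c : R) : a * a + b * b + c * c = 0 -> a = 0.
  by move=> abc; apply/eqP; rewrite -sqrf_eq0; apply/eqP; nra.
case: (ord3P j) => [->|[->|->]]; first exact: (sq0 _ _ _ u0).
- by apply: (sq0 _ (u 0 c0) (u 0 c2)); rewrite -u0; ring.
- by apply: (sq0 _ (u 0 c0) (u 0 c1)); rewrite -u0; ring.
Qed.

Lemma dot_gt0 u : u != 0 -> 0 < dot u u.
Proof. by move=> u0; rewrite lt_neqAle dot_ge0 andbT eq_sym dot_eq0. Qed.

Lemma lagrange u w :
  dot (cross u w) (cross u w) = dot u u * dot w w - dot u w ^+ 2.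
Proof. rewrite !dotE /cross !mxE /=; ring. Qed.

Lemma cross_perp u w n (s r : R) :
  dot (cross (u - s *: n) (w - r *: n)) n = dot (cross u w) n.
Proof. rewrite !dotE /cross !mxE /=; ring. Qed.

Lemma dist2C P Q : dist2 P Q = dist2 Q P.
Proof. rewrite /dist2 /vec !dotE !mxE; ring. Qed.

Lemma dot_polar L M K :
  2 * dot (vec L K) (vec L M) = dist2 L K + dist2 L M - dist2 M K.
Proof. rewrite /dist2 /vec !dotE !mxE; ring. Qed.

Definition reflection n P0 P : 'rV[R]_3 :=
  P - (2 * dot (P - P0) n / dot n n) *: n.

Lemma mirror_reflection_proper n P0 : n != 0 ->
  exists (Q : 'M[R]_3) (t : 'rV[R]_3), rotation Q /\
    forall P, P *m Q + t = mirror (reflection n P0 P).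
Proof.
rewrite -dot_eq0 dotE => nn0.
exists (\matrix_(i, j) (((i == j)%:R - 2 * n 0 i * n 0 j / dot n n)
                        * (if j == c0 then -1 else 1))).
exists (\row_j ((2 * dot P0 n / dot n n) * n 0 j * (if j == c0 then -1 else 1))).
split; [split|].
- apply/matrixP => i j; rewrite !mxE sum3 !mxE dotE.
  by case: (ord3P i) => [->|[->|->]]; case: (ord3P j) => [->|[->|->]] /=; field.
- by rewrite det3 !mxE dotE /=; field.
- move=> P; apply/rowP => j; rewrite !mxE sum3 !mxE !dotE !mxE.
  by case: (ord3P j) => [->|[->|->]] /=; field.
Qed.

Lemma reflectionK n P0 : n != 0 -> involutive (reflection n P0).
Proof.
rewrite -dot_eq0 dotE => nn0 P; apply/rowP => j.
rewrite /reflection !mxE !dotE !mxE.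
by case: (ord3P j) => [->|[->|->]] /=; field.
Qed.

Lemma achiral_of_reflection n P0 A B C D : n != 0 ->
  (forall P, P \in [:: A; B; C; D] -> reflection n P0 P \in [:: A; B; C; D]) ->
  achiral A B C D.
Proof.
move=> n0 stable; have [Q [t [rotQ motion]]] := mirror_reflection_proper P0 n0.
exists Q, t; split => //=.
have -> : [:: mirror A; mirror B; mirror C; mirror D] =
          map (@mirror R) [:: A; B; C; D] by [].
split => [P PS | _ /mapP [X XS ->]]; first by rewrite motion map_f // stable.
exists (reflection n P0 X); first exact: stable.
by rewrite motion reflectionK.
Qed.

Definition bisector_reflection X Y := reflection (X - Y) ((1/2 : R) *: (X + Y)).

Lemma bisector_reflection_swap X Y : X != Y -> bisector_reflection X Y X = Y.
Proof.
rewrite -subr_eq0 -dot_eq0 dotE !mxE => nn0; apply/rowP => j.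
rewrite /bisector_reflection /reflection !mxE !dotE !mxE.
by case: (ord3P j) => [->|[->|->]] /=; field.
Qed.

Lemma bisector_reflection_fix X Y P :
  dist2 P X = dist2 P Y -> bisector_reflection X Y P = P.
Proof.
move=> equi; rewrite /bisector_reflection /reflection.
suff -> : dot (P - (1/2 : R) *: (X + Y)) (X - Y) = 0
  by rewrite mulr0 mul0r scale0r subr0.
have -> : dot (P - (1/2 : R) *: (X + Y)) (X - Y) = (dist2 P Y - dist2 P X) / 2.
  by rewrite /dist2 /vec !dotE !mxE; field.
by rewrite equi subrr mul0r.
Qed.

Lemma achiral_swapAB A B C D : A != B ->
  dist2 A C = dist2 B C -> dist2 A D = dist2 B D -> achiral A B C D.
Proof.
move=> AB eqC eqD; apply: (@achiral_of_reflection (A - B) ((1/2 : R) *: (A + B))).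
  by rewrite subr_eq0.
have sA : bisector_reflection A B A = B by exact: bisector_reflection_swap.
have sB : bisector_reflection A B B = A.
  by rewrite -{2}sA /bisector_reflection reflectionK // subr_eq0.
have sC : bisector_reflection A B C = C.
  by apply: bisector_reflection_fix; rewrite !(dist2C C).
have sD : bisector_reflection A B D = D.
  by apply: bisector_reflection_fix; rewrite !(dist2C D).
move=> P; rewrite -/(bisector_reflection A B P) !inE.
by case/or4P => /eqP ->; rewrite ?sA ?sB ?sC ?sD eqxx ?orbT.
Qed.

Lemma achiral_swapCD A B C D : C != D ->
  dist2 A C = dist2 A D -> dist2 B C = dist2 B D -> achiral A B C D.
Proof.
move=> CD eqA eqB; apply: (@achiral_of_reflection (C - D) ((1/2 : R) *: (C + D))).
  by rewrite subr_eq0.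
have sC : bisector_reflection C D C = D by exact: bisector_reflection_swap.
have sD : bisector_reflection C D D = C.
  by rewrite -{2}sC /bisector_reflection reflectionK // subr_eq0.
have sA : bisector_reflection C D A = A by exact: bisector_reflection_fix.
have sB : bisector_reflection C D B = B by exact: bisector_reflection_fix.
move=> P; rewrite -/(bisector_reflection C D P) !inE.
by case/or4P => /eqP ->; rewrite ?sA ?sB ?sC ?sD eqxx ?orbT.
Qed.

Lemma tetra_nondeg_distinct A B C D : tetra_nondeg A B C D -> A != B /\ C != D.
Proof.
move=> nd; split; apply/eqP => E; move/negP: nd; apply; apply/eqP;
  rewrite E /vec !dotE /cross !mxE /=; ring.
Qed.

Lemma cos_angle_sqr_lt1 u w :
  cross u w != 0 -> (dot u w / (vnorm u * vnorm w)) ^+ 2 < 1.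
Proof.
move=> /dot_gt0; rewrite lagrange => uw_pos.
have uw0 : 0 < dot u u * dot w w by have := dot_ge0 (cross u w); nra.
rewrite /vnorm -sqrtrM ?dot_ge0 // expr_div_n sqr_sqrtr ?ltW //.
by rewrite ltr_pdivrMr // mul1r; lra.
Qed.

Lemma sin_dihedral_gt0 A B C D : tetra_nondeg A B C D -> 0 < sin (dihedral A B C D).
Proof.
rewrite /tetra_nondeg /dihedral => nd.
set u := perp_comp A B C; set w := perp_comp A B D.
have uw : cross u w != 0.
  apply/eqP => uw0; move/negP: nd; apply.
  rewrite -(cross_perp _ _ _ (dot (vec A C) (vec A B) / dot (vec A B) (vec A B))
                           (dot (vec A D) (vec A B) / dot (vec A B) (vec A B))).
  by rewrite -/(perp_comp A B C) -/(perp_comp A B D) -/u -/w uw0 /dot big1 // => i _;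
    rewrite mxE mul0r.
have k_lt1 := cos_angle_sqr_lt1 uw.
have k_bound : -1 <= dot u w / (vnorm u * vnorm w) <= 1 by apply/andP; split; nra.
by rewrite sin_acos // sqrtr_gt0 subr_gt0.
Qed.

Lemma vnorm_gt0 L M : L != M -> 0 < vnorm (vec L M).
Proof. by move=> LM; rewrite sqrtr_gt0 dot_gt0 // subr_eq0 eq_sym. Qed.

(* The abscissa of K is the signed distance to the perpendicular bisector
   plane of LM, hence determined by |LK|^2 - |MK|^2. *)
Lemma xcoord_dist L M K : L != M ->
  xcoord L M K = (dist2 L K - dist2 M K) / (2 * vnorm (vec L M)).
Proof.
move=> /vnorm_gt0 d_gt0.
have dd : dist2 L M = vnorm (vec L M) ^+ 2 by rewrite sqr_sqrtr ?dot_ge0.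
have -> : dist2 L K - dist2 M K =
          2 * dot (vec L K) (vec L M) - vnorm (vec L M) ^+ 2.
  by rewrite dot_polar -dd; ring.
by rewrite /xcoord; field; rewrite gt_eqF.
Qed.

(* The ordinate of K is its distance to the line LM (Pythagoras). *)
Lemma ycoord_sqr L M K : L != M ->
  ycoord L M K ^+ 2 = dist2 L K - dot (vec L K) (vec L M) ^+ 2 / dist2 L M.
Proof.
rewrite -subr_eq0 -oppr_eq0 opprB -dot_eq0 => LM.
rewrite /ycoord /vnorm expr_div_n !sqr_sqrtr ?dot_ge0 // lagrange /dist2.
by field.
Qed.

Lemma xcoord_eq L M K F : L != M -> xcoord L M K = xcoord L M F ->
  dist2 L K - dist2 M K = dist2 L F - dist2 M F.
Proof.
move=> LM; have d0 : 2 * vnorm (vec L M) != 0 by rewrite mulf_neq0 ?gt_eqF ?vnorm_gt0.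
by rewrite !xcoord_dist // => /(congr1 ( *%R^~ (2 * vnorm (vec L M)))); rewrite !divfK.
Qed.

Lemma xcoord_eq0 L M K : L != M -> xcoord L M K = 0 -> dist2 L K = dist2 M K.
Proof.
move=> LM; have d0 : 2 * vnorm (vec L M) != 0 by rewrite mulf_neq0 ?gt_eqF ?vnorm_gt0.
rewrite xcoord_dist // => /eqP; rewrite mulf_eq0 invr_eq0 (negbTE d0) orbF.
by rewrite subr_eq0 => /eqP.
Qed.

Lemma same_planar_coords L M K F : L != M ->
  xcoord L M K = xcoord L M F -> ycoord L M K = ycoord L M F ->
  dist2 L K = dist2 L F /\ dist2 M K = dist2 M F.
Proof.
move=> LM hx hy; have ex := xcoord_eq LM hx.
have hdot : dot (vec L K) (vec L M) = dot (vec L F) (vec L M).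
  by have := dot_polar L M K; have := dot_polar L M F; lra.
have eL : dist2 L K = dist2 L F.
  by move: (congr1 (fun y => y ^+ 2) hy); rewrite /= !ycoord_sqr // hdot => /addIr.
by split => //; lra.
Qed.

Lemma v_lab_eq0 (alpha : R) L M K F : sin alpha != 0 ->
  v_lab alpha L M K F = (0, 0) ->
  xcoord L M F = xcoord L M K /\
  (ycoord L M F = ycoord L M K \/ xcoord L M F + xcoord L M K = 0).
Proof.
move=> s0 [] /eqP; rewrite mulf_eq0 (negbTE s0) /= subr_eq0 => /eqP hx /eqP.
rewrite mulf_eq0 (negbTE s0) /= mulf_eq0 subr_eq0 => /orP [] /eqP hy.
- by split; [|left].
- by split; [|right].
Qed.

(* Vanishing of v_AB, independently of the labelling chosen by v_edge. *)
Lemma v_edge_eq0 A B C D : tetra_nondeg A B C D -> v_edge A B C D = (0, 0) ->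
  xcoord A B D = xcoord A B C /\ (ycoord A B D = ycoord A B C \/ xcoord A B C = 0).
Proof.
move=> nd; have s0 : sin (dihedral A B C D) != 0 by rewrite gt_eqF ?sin_dihedral_gt0.
rewrite /v_edge; case: ifP => _ /(v_lab_eq0 s0) [hx hy];
  (split; first lra); case: hy => h; [left | right | left | right]; lra.
Qed.
End Tetrahedron.

Theorem lemma1 (R : realType) (A B C D : 'rV[R]_3) :
  tetra_nondeg A B C D -> v_edge A B C D = (0, 0) -> achiral A B C D.
Proof.
move=> nd v0; have [AB CD] := tetra_nondeg_distinct nd.
have [hx [hy | hx0]] := v_edge_eq0 nd v0.
-
  have [eA eB] := same_planar_coords AB hx hy.
  exact: achiral_swapCD CD (esym eA) (esym eB).
-
  apply: achiral_swapAB => //; apply: xcoord_eq0 => //.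
  by rewrite hx.
Qed.
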